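(* For every permutation $\beta$, the set of properties $\{\operatorname{Av}(\delta) : \delta\le\beta\}$ is query-complete.
   Context: A permutation $\pi$ contains $\sigma$ (written $\sigma\le\pi$) if $\pi$ has a subsequence order-isomorphic to $\sigma$; $\operatorname{Av}(\delta)$ is the set of permutations not containing $\delta$. For $\sigma\in S_m$ and nonempty permutations $\alpha_1,\dots,\alpha_m$, the inflation $\sigma[\alpha_1,\dots,\alpha_m]$ is the permutation obtained by replacing each entry $\sigma(i)$ by an interval (contiguous positions, consecutive values) order-isomorphic to $\alpha_i$. A property is any set of permutations. A set $\mathcal{P}$ of properties is query-complete if for every permutation $\sigma\in S_m$ and every $P\in\mathcal{P}$, whether $\sigma[\alpha_1,\dots,\alpha_m]\in P$ is determined by $\sigma$ together with the knowledge, for each $i\in[m]$ and each $Q\in\mathcal{P}$, of whether $\alpha_i\in Q$. *)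

(* Permutations are in one-line notation on values 0..n-1. *)
From mathcomp Require Import all_boot.
Set Implicit Arguments. Unset Strict Implicit. Unset Printing Implicit Defensive.

Definition is_perm (s : seq nat) : Prop := perm_eq s (iota 0 (size s)).

Definition order_iso (s t : seq nat) : Prop :=
  size s = size t /\
  forall i j, i < size s -> j < size s ->
    (nth 0 s i < nth 0 s j) = (nth 0 t i < nth 0 t j).

Definition contains (sigma pi : seq nat) : Prop :=
  exists m : bitseq, size m = size pi /\ order_iso (mask m pi) sigma.

Definition property := seq nat -> Prop.

Definition Av (delta : seq nat) : property :=
  fun pi => is_perm pi /\ ~ contains delta pi.

Definition infl_offset (sigma : seq nat) (alphas : seq (seq nat)) (i : nat) : nat :=
  sumn [seq size (nth [::] alphas j) |
         j <- iota 0 (size sigma) & nth 0 sigma j < nth 0 sigma i].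

(* the inflation sigma[alpha_1, ..., alpha_m] (blocks indexed from 0) *)
Definition inflate (sigma : seq nat) (alphas : seq (seq nat)) : seq nat :=
  flatten [seq [seq x + infl_offset sigma alphas i | x <- nth [::] alphas i]
          | i <- iota 0 (size sigma)].

(* A set F of properties is query-complete: for every sigma in S_m and P in F,
   membership of sigma[alpha_1..alpha_m] in P is determined by sigma and the
   answers "alpha_i \in Q" for all i and all Q in F. *)
Definition query_complete (F : property -> Prop) : Prop :=
  forall (m : nat) (sigma : seq nat) (alphas alphas' : seq (seq nat)),
    is_perm sigma -> size sigma = m ->
    size alphas = m -> size alphas' = m ->
    (forall i, i < m -> is_perm (nth [::] alphas i) /\ 0 < size (nth [::] alphas i)) ->
    (forall i, i < m -> is_perm (nth [::] alphas' i) /\ 0 < size (nth [::] alphas' i)) ->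
    (forall i, i < m -> forall Q, F Q ->
        (Q (nth [::] alphas i) <-> Q (nth [::] alphas' i))) ->
    forall P, F P -> (P (inflate sigma alphas) <-> P (inflate sigma alphas')).

Definition Av_below (beta : seq nat) : property -> Prop :=
  fun P => exists delta, is_perm delta /\ contains delta beta /\ P = Av delta.

(* An occurrence of delta in sigma[alpha_1, ..., alpha_m] meets each block alpha_i
   in a subsequence whose pattern gamma_i is contained in delta, hence in beta.
   So Av(gamma_i) is one of the queried properties, and alpha'_i, which answers
   every query like alpha_i, contains gamma_i as well.  Replacing each piece by an
   occurrence of gamma_i in alpha'_i yields an occurrence of delta in
   sigma[alpha'_1, ..., alpha'_m]: two entries of an inflation compare like their
   values in sigma when they lie in different blocks, and like their values in
   the block when they lie in the same one. *)

From mathcomp Require Import all_boot.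
From Stdlib Require Import Classical.
Set Implicit Arguments. Unset Strict Implicit. Unset Printing Implicit Defensive.

Lemma mask_zip (S T : Type) m (s : seq S) (t : seq T) :
  size s = size t -> mask m (zip s t) = zip (mask m s) (mask m t).
Proof. by elim: s m t => [|x s IHs] [|[] m] [|y t] //= [/IHs ->]. Qed.

Lemma size_mask_eq (S T : Type) m (s : seq S) (t : seq T) :
  size s = size t -> size (mask m s) = size (mask m t).
Proof. by elim: s m t => [|x s IHs] [|[] m] [|y t] //= [/IHs ->]. Qed.

Lemma mem_zip (S T : eqType) (s : seq S) (t : seq T) x y :
  (x, y) \in zip s t -> x \in s /\ y \in t.
Proof.
elim: s t => [|a s IHs] [|b t] //=; rewrite in_cons => /predU1P [[-> ->] | /IHs []].
  by split; apply: mem_head.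
by move=> xs yt; rewrite !in_cons xs yt !orbT; split.
Qed.

Lemma zip_map2 (A B C D : Type) (f : A -> C) (g : B -> D) s t :
  zip (map f s) (map g t) = [seq (f p.1, g p.2) | p <- zip s t].
Proof. by elim: s t => [|x s IHs] [|y t] //=; rewrite IHs. Qed.

Lemma subseq_cat_inv (T : eqType) (s s1 s2 : seq T) : subseq s (s1 ++ s2) ->
  exists u1 u2, [/\ s = u1 ++ u2, subseq u1 s1 & subseq u2 s2].
Proof.
move=> /subseqP [m szm ->].
have sz_take : size (take (size s1) m) = size s1.
  by rewrite size_takel // szm size_cat leq_addr.
exists (mask (take (size s1) m) s1), (mask (drop (size s1) m) s2).
by rewrite -mask_cat // cat_take_drop !mask_subseq.
Qed.

Lemma subseq_map_inv (S T : eqType) (f : S -> T) (s : seq T) (u : seq S) :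
  subseq s (map f u) -> exists2 v, subseq v u & s = map f v.
Proof. by move=> /subseqP [m _ ->]; exists (mask m u); rewrite ?mask_subseq ?map_mask. Qed.

Lemma nat_bounded_choice (T : Type) (R : nat -> T -> Prop) (x0 : T) n :
  (forall i, i < n -> exists y, R i y) -> exists f : nat -> T, forall i, i < n -> R i (f i).
Proof.
elim: n => [|n IHn] ex_R; first by exists (fun=> x0).
have [f Rf] : exists f : nat -> T, forall i, i < n -> R i (f i).
  by apply: IHn => i /ltnW; apply: ex_R.
have [y Ry] := ex_R n (ltnSn n).
exists (fun i => if i == n then y else f i) => i; rewrite ltnS leq_eqVlt.
by case: eqP => [-> | _ /Rf].
Qed.

Lemma leq_add_sum_pred1 (I : eqType) (r : seq I) (P Q : pred I) (F : I -> nat) i :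
  uniq r -> i \in r -> P i -> (forall k, Q k -> P k && (k != i)) ->
  F i + \sum_(k <- r | Q k) F k <= \sum_(k <- r | P k) F k.
Proof.
move=> r_uniq ir Pi QP.
rewrite -[leqRHS]big_filter (bigD1_seq i) ?mem_filter ?Pi ?filter_uniq //=.
rewrite big_filter_cond leq_add2l big_mkcond [leqRHS]big_mkcond /=.
apply: leq_sum => k _; case Qk: (Q k); last exact: leq0n.
by rewrite QP.
Qed.

Lemma order_iso_zip s t : order_iso s t <->
  size s = size t /\
  forall p q, p \in zip s t -> q \in zip s t -> (p.1 < q.1) = (p.2 < q.2).
Proof.
split=> -[st iso]; split=> //.
  move=> p q /(nthP (0, 0)) [i ltis <-] /(nthP (0, 0)) [j ltjs <-].
  rewrite size_zip st minnn in ltis ltjs.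
  by rewrite !nth_zip // iso // st.
move=> i j ltis ltjs; have szip : size (zip s t) = size s by rewrite size_zip st minnn.
rewrite -szip in ltis ltjs.
by have := iso _ _ (mem_nth (0, 0) ltis) (mem_nth (0, 0) ltjs); rewrite !nth_zip.
Qed.

Lemma order_iso_sym s t : order_iso s t -> order_iso t s.
Proof. by move=> [st iso]; split=> // i j; rewrite -st => ltis ltjs; rewrite iso. Qed.

Lemma order_iso_trans s t u : order_iso s t -> order_iso t u -> order_iso s u.
Proof.
move=> [st iso] [tu iso']; split=> [|i j ltis ltjs]; first by rewrite st.
by rewrite iso // iso' -?st.
Qed.

Lemma order_iso_mask m s t : order_iso s t -> order_iso (mask m s) (mask m t).
Proof.
move=> /order_iso_zip [st iso]; apply/order_iso_zip; split.
  exact: size_mask_eq.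
by move=> p q; rewrite -mask_zip // => /mem_mask ps /mem_mask qs; apply: iso.
Qed.

Lemma order_iso_subseq s t u : subseq s t -> order_iso t u ->
  exists2 s', subseq s' u & order_iso s s'.
Proof.
move=> /subseqP [m _ ->] tu; exists (mask m u); first exact: mask_subseq.
exact: order_iso_mask.
Qed.

Lemma order_iso_addn s c : order_iso [seq x + c | x <- s] s.
Proof.
split=> [|i j]; first by rewrite size_map.
by rewrite size_map => ltis ltjs; rewrite !(nth_map 0) // ltn_add2r.
Qed.

Lemma containsP d p : contains d p <-> exists2 u, subseq u p & order_iso u d.
Proof.
split=> [[m [_ iso]] | [u /subseqP [m szm ->] iso]]; last by exists m.
by exists (mask m p); first exact: mask_subseq.
Qed.

Lemma contains_of_subseq u p d : subseq u p -> order_iso u d -> contains d p.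
Proof. by move=> up ud; apply/containsP; exists u. Qed.

Lemma contains_order_iso d p p' : order_iso p p' -> contains d p -> contains d p'.
Proof.
move=> pp' /containsP [u up ud]; have [u' u'p' uu'] := order_iso_subseq up pp'.
exact: contains_of_subseq u'p' (order_iso_trans (order_iso_sym uu') ud).
Qed.

Lemma contains_trans g d p : contains g d -> contains d p -> contains g p.
Proof.
move=> /containsP [u ud ug] /containsP [v vp vd].
have [u' u'v uu'] := order_iso_subseq ud (order_iso_sym vd).
exact: contains_of_subseq (subseq_trans u'v vp) (order_iso_trans (order_iso_sym uu') ug).
Qed.

Lemma is_perm_uniq s : is_perm s -> uniq s.
Proof. by move=> sP; rewrite (perm_uniq sP) iota_uniq. Qed.

Lemma is_perm_ltn s x : is_perm s -> x \in s -> x < size s.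
Proof. by move=> sP; rewrite (perm_mem sP) mem_iota. Qed.

Lemma is_perm_of_uniq s : uniq s -> all (fun x => x < size s) s -> is_perm s.
Proof.
move=> s_uniq /allP s_lt; have sub_iota : {subset s <= iota 0 (size s)}.
  by move=> x xs; rewrite mem_iota s_lt.
have [_ s_iota] := uniq_min_size s_uniq sub_iota (eq_leq (size_iota 0 _)).
by apply: uniq_perm; rewrite ?iota_uniq.
Qed.

Lemma contains_of_Av_imply g a a' : (Av g a -> Av g a') -> is_perm a ->
  contains g a' -> contains g a.
Proof. by move=> Av_aa' a_perm ga'; apply: NNPP => ga; case: (Av_aa' (conj a_perm ga)). Qed.

Definition std (t : seq nat) : seq nat := [seq count (fun y => y < x) t | x <- t].

Lemma count_leq_ltn (t : seq nat) x :
  count (fun y => y <= x) t = count (fun y => y < x) t + count (pred1 x) t.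
Proof.
elim: t => //= y t ->; rewrite addnACA; congr (_ + _).
by rewrite leq_eqVlt; case: ltngtP.
Qed.

Lemma count_ltn_leq (t : seq nat) x : x \in t ->
  count (fun y => y < x) t < count (fun y => y <= x) t.
Proof.
by move=> xt; rewrite count_leq_ltn -{1}[count _ t]addn0 ltn_add2l -has_count has_pred1.
Qed.

Lemma std_ltn (t : seq nat) x y : x \in t ->
  (x < y) = (count (fun z => z < x) t < count (fun z => z < y) t).
Proof.
move=> xt; case: ltnP => [ltxy | leyx]; apply/esym.
  apply: leq_trans (count_ltn_leq xt) (sub_count _ _) => z /=.
  by move=> lezx; apply: leq_ltn_trans lezx ltxy.
apply/negbTE; rewrite -leqNgt; apply: sub_count => z /=.
by move=> ltzy; apply: leq_trans ltzy leyx.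
Qed.

Lemma order_iso_std t : order_iso t (std t).
Proof.
split=> [|i j]; first by rewrite size_map.
by move=> ltit ltjt; rewrite !(nth_map 0) // -std_ltn // mem_nth.
Qed.

Lemma std_perm t : uniq t -> is_perm (std t).
Proof.
move=> t_uniq; apply: is_perm_of_uniq.
  rewrite map_inj_in_uniq // => x y xt yt eq_xy.
  case: (ltngtP x y) => // [ltxy | ltyx].
    by rewrite (std_ltn y xt) eq_xy ltnn in ltxy.
  by rewrite (std_ltn x yt) eq_xy ltnn in ltyx.
apply/allP => _ /mapP [x xt ->]; rewrite size_map.
exact: leq_trans (count_ltn_leq xt) (count_size _ _).
Qed.

Definition tagged_flatten (I T : Type) (r : seq I) (f : I -> seq T) : seq (I * T) :=
  flatten [seq [seq (i, x) | x <- f i] | i <- r].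

Lemma tagged_flatten_cons (I T : Type) i (r : seq I) (f : I -> seq T) :
  tagged_flatten (i :: r) f = [seq (i, x) | x <- f i] ++ tagged_flatten r f.
Proof. by []. Qed.

Lemma size_tagged_flatten (I T : Type) (r : seq I) (f : I -> seq T) :
  size (tagged_flatten r f) = \sum_(i <- r) size (f i).
Proof.
by elim: r => [|i r IHr]; rewrite ?big_nil // tagged_flatten_cons big_cons size_cat size_map IHr.
Qed.

Section TaggedFlatten.

Variables I T : eqType.
Implicit Types (r : seq I) (f g : I -> seq T).

Lemma mem_tagged_flatten r f p :
  (p \in tagged_flatten r f) = (p.1 \in r) && (p.2 \in f p.1).
Proof.
apply/flattenP/andP => [[_ /mapP [i ir ->] /mapP [x xf ->]] // | [pr pf]].
by exists [seq (p.1, x) | x <- f p.1]; [apply: map_f | case: p pf {pr} => i x /= /map_f].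
Qed.

Lemma tagged_flatten_subseq r f g : {in r, forall i, subseq (g i) (f i)} ->
  subseq (tagged_flatten r g) (tagged_flatten r f).
Proof.
elim: r => [|i r IHr] //= sub_gf; rewrite !tagged_flatten_cons.
apply: cat_subseq; first by apply: map_subseq; rewrite sub_gf ?mem_head.
by apply: IHr => j jr; rewrite sub_gf // in_cons jr orbT.
Qed.

Lemma block_subseq_tagged_flatten r f i : i \in r ->
  subseq [seq (i, x) | x <- f i] (tagged_flatten r f).
Proof.
elim: r => [|j r IHr] //; rewrite in_cons tagged_flatten_cons => /predU1P [-> | ir].
  exact: prefix_subseq.
exact: subseq_trans (IHr ir) (suffix_subseq _ _).
Qed.

Lemma tagged_flatten_uniq r f : uniq r -> {in r, forall i, uniq (f i)} ->
  uniq (tagged_flatten r f).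
Proof.
elim: r => [|i r IHr] //= /andP [ir r_uniq] f_uniq; rewrite tagged_flatten_cons cat_uniq.
apply/and3P; split.
- by rewrite map_inj_uniq ?f_uniq ?mem_head // => x y [].
- apply/hasP => -[p]; rewrite mem_tagged_flatten => /andP [pr _] /mapP [x _ p_eq].
  by move: pr; rewrite p_eq (negbTE ir).
- by apply: IHr => // j jr; rewrite f_uniq // in_cons jr orbT.
Qed.

Lemma subseq_tagged_flatten_inv r f s : uniq r -> subseq s (tagged_flatten r f) ->
  exists2 g, {in r, forall i, subseq (g i) (f i)} & s = tagged_flatten r g.
Proof.
elim: r s => [|i r IHr] s; first by move=> _; rewrite subseq0 => /eqP ->; exists f.
move=> /andP [ir r_uniq]; rewrite tagged_flatten_cons.
move=> /subseq_cat_inv [s1 [s2 [-> /subseq_map_inv [u uf ->] /(IHr _ r_uniq) [g gf ->]]]].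
exists (fun j => if j == i then u else g j).
  by move=> j; rewrite in_cons; case: eqP => [-> | _ /= /gf].
rewrite tagged_flatten_cons eqxx; congr (_ ++ flatten _); apply/eq_in_map => j jr.
by case: eqP jr => // ->; rewrite (negbTE ir).
Qed.

Lemma zip_tagged_flatten r f g : {in r, forall i, size (f i) = size (g i)} ->
  zip (tagged_flatten r f) (tagged_flatten r g) =
  [seq ((p.1, p.2.1), (p.1, p.2.2)) | p <- tagged_flatten r (fun i => zip (f i) (g i))].
Proof.
elim: r => [|i r IHr] // sz_fg; rewrite !tagged_flatten_cons map_cat zip_cat; last first.
  by rewrite !size_map sz_fg ?mem_head.
rewrite zip_map2 IHr -?map_comp // => j jr.
by rewrite sz_fg // in_cons jr orbT.
Qed.

End TaggedFlatten.

Section Inflation.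

Variable sigma : seq nat.
Hypothesis sigma_perm : is_perm sigma.
Local Notation blocks := (iota 0 (size sigma)).

Definition perm_blocks (alphas : seq (seq nat)) : Prop :=
  forall i, i < size sigma -> is_perm (nth [::] alphas i).

(* Entries of an inflation are addressed by cells [(i, x)]: value [x] of block [i]. *)
Definition infl_entry (alphas : seq (seq nat)) (p : nat * nat) : nat :=
  p.2 + infl_offset sigma alphas p.1.

Definition block_lt (p q : nat * nat) : bool :=
  if p.1 == q.1 then p.2 < q.2 else nth 0 sigma p.1 < nth 0 sigma q.1.

Lemma inflateE alphas :
  inflate sigma alphas = map (infl_entry alphas) (tagged_flatten blocks (nth [::] alphas)).
Proof.
rewrite /inflate /tagged_flatten map_flatten -map_comp; congr flatten.
by apply/eq_map => i /=; rewrite -map_comp.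
Qed.

Lemma infl_offsetE alphas i : infl_offset sigma alphas i =
  \sum_(j <- blocks | nth 0 sigma j < nth 0 sigma i) size (nth [::] alphas j).
Proof. by rewrite /infl_offset sumnE big_map big_filter. Qed.

Lemma infl_offset_lt alphas i j : i < size sigma -> nth 0 sigma i < nth 0 sigma j ->
  infl_offset sigma alphas i + size (nth [::] alphas i) <= infl_offset sigma alphas j.
Proof.
move=> ltis ltij; rewrite !infl_offsetE addnC; apply: leq_add_sum_pred1 => //.
- exact: iota_uniq.
- by rewrite mem_iota.
- by move=> k ltki; rewrite (ltn_trans ltki ltij); apply: contraTneq ltki => ->; rewrite ltnn.
Qed.

Lemma infl_offset_bound alphas i : i < size sigma ->
  infl_offset sigma alphas i + size (nth [::] alphas i) <= size (inflate sigma alphas).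
Proof.
move=> ltis; rewrite inflateE size_map size_tagged_flatten infl_offsetE addnC.
rewrite -[leqRHS](big_filter _ predT) filter_predT.
apply: leq_add_sum_pred1 => //.
- exact: iota_uniq.
- by rewrite mem_iota.
- by move=> k ltki; apply: contraTneq ltki => ->; rewrite ltnn.
Qed.

Lemma infl_entry_lt alphas p q : perm_blocks alphas ->
  p \in tagged_flatten blocks (nth [::] alphas) ->
  q \in tagged_flatten blocks (nth [::] alphas) ->
  (infl_entry alphas p < infl_entry alphas q) = block_lt p q.
Proof.
move=> alphas_perm; rewrite !mem_tagged_flatten => /andP [ib xa] /andP [jb ya].
case: p q ib jb xa ya => i x [j y] /=; rewrite !mem_iota add0n => ltis ltjs xa ya.
have ltx := is_perm_ltn (alphas_perm i ltis) xa.
have lty := is_perm_ltn (alphas_perm j ltjs) ya.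
rewrite /infl_entry /block_lt /=; case: eqP => [-> | neq_ij]; first by rewrite ltn_add2r.
case: (ltngtP (nth 0 sigma i) (nth 0 sigma j)) => [ltij | ltji | eq_ij].
- apply: leq_trans _ (leq_trans (infl_offset_lt alphas ltis ltij) (leq_addl y _)).
  by rewrite addnC ltn_add2l.
- apply/negbTE; rewrite -leqNgt; apply: ltnW.
  apply: leq_trans _ (leq_trans (infl_offset_lt alphas ltjs ltji) (leq_addl x _)).
  by rewrite addnC ltn_add2l.
- by case: neq_ij; apply/eqP; rewrite -(nth_uniq 0 ltis ltjs (is_perm_uniq sigma_perm)) eq_ij.
Qed.

Lemma infl_entry_inj alphas : perm_blocks alphas ->
  {in tagged_flatten blocks (nth [::] alphas) &, injective (infl_entry alphas)}.
Proof.
move=> alphas_perm p q pa qa eq_pq.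
have := infl_entry_lt alphas_perm pa qa; have := infl_entry_lt alphas_perm qa pa.
move: pa qa; rewrite !mem_tagged_flatten => /andP [ib _] /andP [jb _].
rewrite eq_pq ltnn /block_lt eq_sym; case: p q ib jb {eq_pq} => i x [j y] /=.
rewrite !mem_iota add0n => ltis ltjs; case: eqP => [-> | neq_ij].
  by case: ltngtP => // ->.
case: ltngtP => // eq_ij; case: neq_ij; apply/eqP.
by rewrite -(nth_uniq 0 ltis ltjs (is_perm_uniq sigma_perm)) eq_ij.
Qed.

Lemma inflate_perm alphas : perm_blocks alphas -> is_perm (inflate sigma alphas).
Proof.
move=> alphas_perm; apply: is_perm_of_uniq.
  rewrite inflateE map_inj_in_uniq; last exact: infl_entry_inj.
  apply: tagged_flatten_uniq; first exact: iota_uniq.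
  by move=> i; rewrite mem_iota => /alphas_perm /is_perm_uniq.
apply/allP => y; rewrite {1}inflateE => /mapP [[i x]].
rewrite mem_tagged_flatten mem_iota add0n => /andP [ltis xa] ->.
apply: leq_trans (infl_offset_bound alphas ltis).
by rewrite /infl_entry addnC ltn_add2l (is_perm_ltn (alphas_perm i ltis)).
Qed.

Lemma order_iso_inflate_blockwise alphas alphas' t t' :
  perm_blocks alphas -> perm_blocks alphas' ->
  (forall i, i < size sigma -> [/\ subseq (t i) (nth [::] alphas i),
     subseq (t' i) (nth [::] alphas' i) & order_iso (t i) (t' i)]) ->
  order_iso [seq infl_entry alphas p | p <- tagged_flatten blocks t]
            [seq infl_entry alphas' p | p <- tagged_flatten blocks t'].
Proof.
move=> alphas_perm alphas'_perm tt'.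
have {}tt' i : i \in blocks -> [/\ subseq (t i) (nth [::] alphas i),
    subseq (t' i) (nth [::] alphas' i) & order_iso (t i) (t' i)].
  by rewrite mem_iota add0n; apply: tt'.
have sub_t : {subset tagged_flatten blocks t <= tagged_flatten blocks (nth [::] alphas)}.
  by apply/mem_subseq/tagged_flatten_subseq => i /tt' [].
have sub_t' : {subset tagged_flatten blocks t' <= tagged_flatten blocks (nth [::] alphas')}.
  by apply/mem_subseq/tagged_flatten_subseq => i /tt' [].
have size_tt' : {in blocks, forall i, size (t i) = size (t' i)}.
  by move=> i /tt' [_ _ []].
apply/order_iso_zip; split.
  by rewrite !size_map !size_tagged_flatten; apply: eq_big_seq.
rewrite zip_map2 zip_tagged_flatten // -map_comp.
move=> _ _ /mapP [[i [x x']] pz ->] /mapP [[j [y y']] qz ->] /=.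
move: pz qz; rewrite !mem_tagged_flatten /= => /andP [ib xx'] /andP [jb yy'].
have [xt x't'] := mem_zip xx'; have [yt y't'] := mem_zip yy'.
rewrite !infl_entry_lt ?sub_t ?sub_t' ?mem_tagged_flatten ?ib ?jb //.
rewrite /block_lt /=; case: eqP => // eq_ij; rewrite -{}eq_ij in yy' *.
have [_ _ /order_iso_zip [_ iso]] := tt' i ib.
exact: iso xx' yy'.
Qed.

Lemma contains_std_block alphas t d i : i < size sigma ->
  order_iso [seq infl_entry alphas p | p <- tagged_flatten blocks t] d ->
  contains (std (t i)) d.
Proof.
move=> ltis iso_d; apply: contains_order_iso iso_d _.
have ib : i \in blocks by rewrite mem_iota.
apply: contains_of_subseq (map_subseq _ (block_subseq_tagged_flatten t ib)) _.
rewrite -map_comp.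
exact: order_iso_trans (order_iso_addn _ (infl_offset sigma alphas i)) (order_iso_std _).
Qed.

Lemma contains_inflate_transfer beta alphas alphas' d :
  perm_blocks alphas -> perm_blocks alphas' ->
  (forall i, i < size sigma -> forall g, is_perm g -> contains g beta ->
     contains g (nth [::] alphas i) -> contains g (nth [::] alphas' i)) ->
  contains d beta -> contains d (inflate sigma alphas) -> contains d (inflate sigma alphas').
Proof.
move=> alphas_perm alphas'_perm transfer_blocks d_beta /containsP [u].
rewrite inflateE => /subseq_map_inv [_ /(subseq_tagged_flatten_inv (iota_uniq _ _)) [t ta ->] ->].
move=> iso_d; have {}ta i : i < size sigma -> subseq (t i) (nth [::] alphas i).
  by move=> ltis; apply: ta; rewrite mem_iota.
have pieces i : i < size sigma -> exists t'i, [/\ subseq (t i) (nth [::] alphas i),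
    subseq t'i (nth [::] alphas' i) & order_iso (t i) t'i].
  move=> ltis; have t_uniq := subseq_uniq (ta i ltis) (is_perm_uniq (alphas_perm i ltis)).
  have std_beta := contains_trans (contains_std_block ltis iso_d) d_beta.
  have std_alpha := contains_of_subseq (ta i ltis) (order_iso_std _).
  have /containsP [t'i t'i_alpha' iso_t'i] :=
    transfer_blocks i ltis _ (std_perm t_uniq) std_beta std_alpha.
  exists t'i; split; rewrite ?ta //.
  exact: order_iso_trans (order_iso_std _) (order_iso_sym iso_t'i).
have [t' tt'] := nat_bounded_choice [::] pieces.
have iso_t' := order_iso_inflate_blockwise alphas_perm alphas'_perm tt'.
apply: contains_of_subseq (order_iso_trans (order_iso_sym iso_t') iso_d).
rewrite inflateE; apply/map_subseq/tagged_flatten_subseq => i.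
by rewrite mem_iota add0n => /tt' [].
Qed.

Lemma Av_inflate_transfer beta alphas alphas' d :
  perm_blocks alphas -> perm_blocks alphas' ->
  (forall i, i < size sigma -> forall g, is_perm g -> contains g beta ->
     Av g (nth [::] alphas i) -> Av g (nth [::] alphas' i)) ->
  contains d beta -> Av d (inflate sigma alphas) -> Av d (inflate sigma alphas').
Proof.
move=> alphas_perm alphas'_perm Av_blocks d_beta [_ d_notin]; split.
  exact: inflate_perm.
apply: contra_not d_notin; apply: (contains_inflate_transfer alphas'_perm alphas_perm _ d_beta).
move=> i ltis g g_perm g_beta.
exact: contains_of_Av_imply (Av_blocks i ltis g g_perm g_beta) (alphas_perm i ltis).
Qed.

End Inflation.

Theorem lemma4p1 (beta : seq nat) : is_perm beta -> query_complete (Av_below beta).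
Proof.
move=> _ m sigma alphas alphas' sigma_perm <- _ _ alphas_perm alphas'_perm same_answers.
move=> _ [d [_ [d_beta ->]]].
have alphas_blocks : perm_blocks sigma alphas by move=> i /alphas_perm [].
have alphas'_blocks : perm_blocks sigma alphas' by move=> i /alphas'_perm [].
have Av_query i g : i < size sigma -> is_perm g -> contains g beta ->
  Av g (nth [::] alphas i) <-> Av g (nth [::] alphas' i).
  by move=> ltis g_perm g_beta; apply: same_answers => //; exists g.
split; apply: Av_inflate_transfer d_beta => // i ltis g g_perm g_beta;
  by rewrite (Av_query i g ltis g_perm g_beta).
Qed.
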